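(* There are 3-SAT formulas $f,f'$ such that their literal-clause graphs are isomorphic, but $f$ is satisfiable and $f'$ is not.
   Context: A 3-SAT formula is a CNF formula (a set of clauses, each a set of at most 3 literals). The literal-clause graph of a CNF formula on variables $x_1,\dots,x_n$ is the unlabeled bipartite graph with the $2n$ literals $x_i,\neg x_i$ on one side, one vertex per clause on the other side, and an edge between literal $\ell$ and clause $c$ iff $\ell\in c$ (no edges between a literal and its negation). *)

From mathcomp Require Import all_boot.
Set Implicit Arguments. Unset Strict Implicit. Unset Printing Implicit Defensive.

(* Literals over variables x_0..x_{n-1}: (i, true) is x_i, (i, false) is ~ x_i. *)
Definition lit (n : nat) : finType := ('I_n * bool)%type.

Definition cnf (n : nat) := {set {set lit n}}.

Definition is_3sat (n : nat) (f : cnf n) : Prop :=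
  forall c, c \in f -> #|c| <= 3.

Definition satisfiable (n : nat) (f : cnf n) : Prop :=
  exists a : 'I_n -> bool, forall c, c \in f -> exists2 l, l \in c & a l.1 == l.2.

(* Isomorphism of literal-clause graphs (unlabeled bipartite graphs: literal
   vertices on one side, one vertex per clause on the other, edge l -- c iff
   l \in c).  The negation pairing of literals is NOT required to be
   preserved (the graph is unlabeled). *)
Definition lc_graph_iso (n n' : nat) (f : cnf n) (f' : cnf n') : Prop :=
  exists (g : lit n -> lit n') (h : {set lit n} -> {set lit n'}),
    [/\ bijective g,
        {in f &, injective h},
        h @: f = f' &
        forall (l : lit n) (c : {set lit n}), c \in f -> (l \in c) = (g l \in h c)].

(** The literal-clause graph forgets which pairs of literals are complementary.
    The formula {x0}, {x1} is satisfied by the all-true assignment, and the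
    transposition of the literal vertices x1 and ~x0 carries its graph onto that
    of {x0}, {~x0}, which is unsatisfiable. *)

From mathcomp Require Import all_boot perm.

Set Implicit Arguments.
Unset Strict Implicit.
Unset Printing Implicit Defensive.

Definition neg_lit n (l : lit n) : lit n := (l.1, ~~ l.2).

Lemma lc_graph_iso_imset n n' (g : lit n -> lit n') (f : cnf n) :
  bijective g -> lc_graph_iso f [set g @: c | c : {set lit n} in f].
Proof.
move=> g_bij; have g_inj := bij_inj g_bij.
exists g, (fun c : {set lit n} => g @: c); split=> //.
- by move=> c d _ _; apply: imset_inj.
- by move=> l c _; rewrite mem_imset.
Qed.

Lemma is_3sat_units n (l l' : lit n) : is_3sat [set [set l]; [set l']].
Proof. by move=> c /set2P[] ->; rewrite cards1. Qed.

Lemma satisfiable_positive n (f : cnf n) :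
  (forall c, c \in f -> exists i, (i, true) \in c) -> satisfiable f.
Proof. by move=> pos; exists (fun _ => true) => c /pos[i ci]; exists (i, true). Qed.

Lemma unsatisfiable_complementary_units n (f : cnf n) (l : lit n) :
  [set l] \in f -> [set neg_lit l] \in f -> ~ satisfiable f.
Proof.
move=> fl fnl [a sat_a].
have [_ /set1P -> /eqP al] := sat_a _ fl.
have [_ /set1P -> /eqP anl] := sat_a _ fnl.
by move: anl; rewrite /= al; case: (l.2).
Qed.

Theorem lemma3 :
  exists (n n' : nat) (f : cnf n) (f' : cnf n'),
    [/\ is_3sat f, is_3sat f', lc_graph_iso f f', satisfiable f & ~ satisfiable f'].
Proof.
pose x0 : lit 2 := (ord0, true); pose x1 : lit 2 := (ord_max, true).
pose f : cnf 2 := [set [set x0]; [set x1]].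
pose f' : cnf 2 := [set [set x0]; [set neg_lit x0]].
have swap_f : [set tperm x1 (neg_lit x0) @: c | c : {set lit 2} in f] = f'.
  by rewrite imsetU1 !imset_set1 tpermL tpermD.
exists 2, 2, f, f'; split.
- exact: is_3sat_units.
- exact: is_3sat_units.
- by rewrite -swap_f; apply: lc_graph_iso_imset; exists (tperm x1 (neg_lit x0)); apply: tpermK.
- by apply: satisfiable_positive => c /set2P[] ->; [exists ord0 | exists ord_max]; rewrite set11.
- by apply: (@unsatisfiable_complementary_units _ _ x0); rewrite !inE eqxx ?orbT.
Qed.
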